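(* Let $\mu=\delta\mu'+(1-\delta)\nu$ where $\mu',\nu$ are distributions on $\Sigma\times\Gamma\times\Phi$ and $\delta\in(0,1]$, and let $t:\mathsf{supp}(\mu)\to\mathcal{A}$ ($\mathcal{A}$ a finite Abelian group). Let $\mathcal{G}_\mu$ be the $3$-player $\mathsf{XOR}$ game with question distribution $\mu$ and target $t$, and $\mathcal{G}_{\mu'}$ the game with the same target and question distribution $\mu'$. Then $$\mathsf{val}(\mathcal{G}_\mu^{\otimes n})\le\mathsf{val}(\mathcal{G}_{\mu'}^{\otimes \delta n/2})+2^{-\Omega(\delta n)}.$$
   Context: In a $3$-player $\mathsf{XOR}$ game with distribution $\mu$ and target $t$, the $n$-fold repeated value is $\max_{f,g,h}\Pr_{(x,y,z)\sim\mu^{\otimes n}}[f(x)_i+g(y)_i+h(z)_i=t(x_i,y_i,z_i)\ \forall i\in[n]]$ over $f:\Sigma^n\to\mathcal{A}^n$, $g:\Gamma^n\to\mathcal{A}^n$, $h:\Phi^n\to\mathcal{A}^n$. The $\Omega(\cdot)$ hides an absolute constant. *)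

From HB Require Import structures.
From mathcomp Require Import all_boot all_order all_algebra.
From mathcomp Require Import all_classical all_reals all_analysis.
Set Implicit Arguments. Unset Strict Implicit. Unset Printing Implicit Defensive.
Import Order.TTheory GRing.Theory Num.Theory.
Local Open Scope ring_scope.

Definition is_distr (R : realType) (T : finType) (p : {ffun T -> R}) : Prop :=
  (forall x, 0 <= p x) /\ \sum_(x : T) p x = 1.

Section XorGame.
Variables (R : realType) (S G P : finType) (A : finZmodType).

Definition xor_win_prob (mu : {ffun S * G * P -> R}) (t : S * G * P -> A) (n : nat)
  (f : {ffun n.-tuple S -> n.-tuple A}) (g : {ffun n.-tuple G -> n.-tuple A})
  (h : {ffun n.-tuple P -> n.-tuple A}) : R :=
  \sum_(q : n.-tuple (S * G * P))
     (\prod_(i < n) mu (tnth q i)) *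
     ([forall i : 'I_n,
         tnth (f (map_tuple (fun z => z.1.1) q)) i
       + tnth (g (map_tuple (fun z => z.1.2) q)) i
       + tnth (h (map_tuple (fun z => z.2) q)) i == t (tnth q i)])%:R.

Definition xor_val (mu : {ffun S * G * P -> R}) (t : S * G * P -> A) (n : nat) : R :=
  \big[Num.max/0]_(f : {ffun n.-tuple S -> n.-tuple A})
   \big[Num.max/0]_(g : {ffun n.-tuple G -> n.-tuple A})
    \big[Num.max/0]_(h : {ffun n.-tuple P -> n.-tuple A})
      xor_win_prob mu t f g h.
End XorGame.

From HB Require Import structures.
From mathcomp Require Import all_boot all_order all_algebra.
From mathcomp Require Import all_classical all_reals all_analysis.
From mathcomp Require Import lra.
Import Order.TTheory GRing.Theory Num.Theory.
Local Open Scope ring_scope.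

(* Toss, for every coordinate, a [delta]-coin deciding whether its question is drawn from
   [mu'] or from [nu]; let [k] be the number of [mu']-coordinates. If [k >= m], fixing the
   questions of all coordinates but [m] of the [mu']-coordinates leaves a strategy for the
   [m]-fold game on [mu'], so the players win with probability at most [val(mu'^m)]. If
   [k < m], use the bound [1 <= 2 ^ (m - k)]. Averaging over the coins,
   [E[2 ^ (m - k)] = 2 ^ m (1 - delta / 2) ^ n], which is [2 ^ (- Omega(delta n))] for
   [m = delta n / 2]. *)

Set Implicit Arguments. Unset Strict Implicit.

Section InsertTuple.
Variable T : Type.

Definition insert_tuple n (i0 : 'I_n.+1) (x : T) (q : n.-tuple T) : n.+1.-tuple T :=
  [tuple if unlift i0 k is Some j then tnth q j else x | k < n.+1].

Definition delete_tuple n (i0 : 'I_n.+1) (q : n.+1.-tuple T) : n.-tuple T :=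
  [tuple tnth q (lift i0 j) | j < n].

Lemma tnth_insert_tuple n (i0 : 'I_n.+1) x (q : n.-tuple T) :
  tnth (insert_tuple i0 x q) i0 = x.
Proof. by rewrite tnth_mktuple unlift_none. Qed.

Lemma tnth_insert_tuple_lift n (i0 : 'I_n.+1) x (q : n.-tuple T) j :
  tnth (insert_tuple i0 x q) (lift i0 j) = tnth q j.
Proof. by rewrite tnth_mktuple liftK. Qed.

Lemma insert_tupleK n (i0 : 'I_n.+1) x : cancel (insert_tuple i0 x) (delete_tuple i0).
Proof. by move=> q; apply: eq_from_tnth => j; rewrite tnth_mktuple tnth_insert_tuple_lift. Qed.

Lemma delete_tupleK n (i0 : 'I_n.+1) (q : n.+1.-tuple T) :
  insert_tuple i0 (tnth q i0) (delete_tuple i0 q) = q.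
Proof.
apply: eq_from_tnth => k; case: (unliftP i0 k) => [j ->|->].
  by rewrite tnth_insert_tuple_lift tnth_mktuple.
by rewrite tnth_insert_tuple.
Qed.

End InsertTuple.

Lemma map_insert_tuple (T U : Type) (phi : T -> U) n (i0 : 'I_n.+1) x (q : n.-tuple T) :
  map_tuple phi (insert_tuple i0 x q) = insert_tuple i0 (phi x) (map_tuple phi q).
Proof.
apply: eq_from_tnth => k; rewrite tnth_map; case: (unliftP i0 k) => [j ->|->].
  by rewrite !tnth_insert_tuple_lift tnth_map.
by rewrite !tnth_insert_tuple.
Qed.

Definition fix_question (T : finType) (A : Type) n (i0 : 'I_n.+1) (x : T)
    (f : {ffun n.+1.-tuple T -> n.+1.-tuple A}) : {ffun n.-tuple T -> n.-tuple A} :=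
  [ffun s => delete_tuple i0 (f (insert_tuple i0 x s))].

Section TupleSums.
Variables (R : comPzSemiRingType) (T : finType).

Lemma sum_insert_tuple n (i0 : 'I_n.+1) (F : n.+1.-tuple T -> R) :
  \sum_(q : n.+1.-tuple T) F q = \sum_(x : T) \sum_(q : n.-tuple T) F (insert_tuple i0 x q).
Proof.
rewrite pair_big /= (reindex (fun p : T * n.-tuple T => insert_tuple i0 p.1 p.2)) //=.
exists (fun q => (tnth q i0, delete_tuple i0 q)) => [[x q] _|q _] /=.
  by rewrite tnth_insert_tuple insert_tupleK.
by rewrite delete_tupleK.
Qed.

Lemma prod_insert_tuple n (i0 : 'I_n.+1) (w : 'I_n.+1 -> T -> R) x (q : n.-tuple T) :
  \prod_(k < n.+1) w k (tnth (insert_tuple i0 x q) k)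
  = w i0 x * \prod_(j < n) w (lift i0 j) (tnth q j).
Proof.
rewrite (bigD1_ord i0) //= tnth_insert_tuple; congr (_ * _).
by apply: eq_bigr => j _; rewrite tnth_insert_tuple_lift.
Qed.

Lemma sum_prod_tnth n (w : 'I_n -> T -> R) :
  \sum_(q : n.-tuple T) \prod_(i < n) w i (tnth q i) = \prod_(i < n) \sum_(x : T) w i x.
Proof.
rewrite bigA_distr_bigA /= (reindex (fun f : {ffun 'I_n -> T} => [tuple f i | i < n])) /=.
  by apply: eq_bigr => f _; apply: eq_bigr => i _; rewrite tnth_mktuple.
exists (fun q : n.-tuple T => [ffun i => tnth q i]) => [f _|q _].
  by apply/ffunP => i; rewrite ffunE tnth_mktuple.
by apply: eq_from_tnth => i; rewrite tnth_mktuple ffunE.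
Qed.

End TupleSums.

Lemma sum_prod_distr (R : realType) (T : finType) n (w : 'I_n -> {ffun T -> R}) :
  (forall i, is_distr (w i)) -> \sum_(q : n.-tuple T) \prod_(i < n) w i (tnth q i) = 1.
Proof.
by move=> w_distr; rewrite (sum_prod_tnth (fun i => w i)) big1 // => i _; case: (w_distr i).
Qed.

Lemma subset_of_card (T : finType) (U : {set T}) m :
  (m <= #|U|)%N -> exists2 V : {set T}, V \subset U & #|V| = m.
Proof.
move=> leU; exists [set x in take m (enum U)].
  by apply/fintype.subsetP => x; rewrite inE => /mem_take; rewrite mem_enum.
rewrite cardsE (card_uniqP _) ?take_uniq ?enum_uniq // size_take -cardE.
by case: ltngtP leU => // ->.
Qed.

Lemma card_preimset_lift n (i0 : 'I_n.+1) (U : {set 'I_n.+1}) :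
  i0 \notin U -> #|lift i0 @^-1: U| = #|U|.
Proof.
move=> i0U; rewrite -(card_imset _ (@lift_inj _ i0)); apply: eq_card => k.
case: (unliftP i0 k) => [j ->|->]; first by rewrite mem_imset ?inE //; exact: lift_inj.
rewrite (negbTE i0U); apply/imsetP => -[j _] /eqP; by rewrite (negbTE (neq_lift i0 j)).
Qed.

Definition coin_weight (R : pzRingType) n (delta : R) (b : {ffun 'I_n -> bool}) : R :=
  \prod_(i < n) (if b i then delta else 1 - delta).

Lemma sum_coin_weight_expr (R : comPzRingType) n (delta r : R) :
  \sum_(b : {ffun 'I_n -> bool}) coin_weight delta b * r ^+ #|[set i | b i]|
  = (delta * r + (1 - delta)) ^+ n.
Proof.
rewrite (eq_bigr (fun b : {ffun _ -> bool} =>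
  \prod_(i < n) if b i then delta * r else 1 - delta)); last first.
  move=> b _; rewrite -prodr_const big_mkcond /coin_weight -big_split /=.
  by apply: eq_bigr => i _; rewrite inE; case: (b i); rewrite ?mulr1.
rewrite -(bigA_distr_bigA (fun (i : 'I_n) (j : bool) => if j then delta * r else 1 - delta)) /=.
rewrite (eq_bigr (fun _ => delta * r + (1 - delta))) ?prodr_const ?card_ord //.
by move=> i _; rewrite big_bool.
Qed.

Lemma coin_weight_ge0 (R : numDomainType) n (delta : R) (b : {ffun 'I_n -> bool}) :
  0 <= delta <= 1 -> 0 <= coin_weight delta b.
Proof. by case/andP=> d0 d1; apply: prodr_ge0 => i _; case: (b i); rewrite ?subr_ge0. Qed.

Section ProductXorGame.
Variables (R : realType) (S G P : finType) (A : finZmodType) (t : S * G * P -> A).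
Local Notation X := (S * G * P)%type.

Definition wins_at n (f : {ffun n.-tuple S -> n.-tuple A})
    (g : {ffun n.-tuple G -> n.-tuple A}) (h : {ffun n.-tuple P -> n.-tuple A})
    (q : n.-tuple X) (i : 'I_n) : bool :=
  tnth (f (map_tuple (fun z => z.1.1) q)) i
  + tnth (g (map_tuple (fun z => z.1.2) q)) i
  + tnth (h (map_tuple (fun z => z.2) q)) i == t (tnth q i).

Definition win_prob_on n (w : 'I_n -> {ffun X -> R}) (U : {set 'I_n}) f g h : R :=
  \sum_(q : n.-tuple X) (\prod_(i < n) w i (tnth q i)) * [forall i in U, wins_at f g h q i]%:R.

Lemma xor_val_ge0 (mu : {ffun X -> R}) n : 0 <= xor_val mu t n.
Proof. exact: bigmax_ge_id. Qed.

Lemma xor_win_prob_le_val (mu : {ffun X -> R}) n (f : {ffun n.-tuple S -> n.-tuple A})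
    (g : {ffun n.-tuple G -> n.-tuple A}) (h : {ffun n.-tuple P -> n.-tuple A}) :
  xor_win_prob mu t f g h <= xor_val mu t n.
Proof.
apply: le_trans (le_bigmax _ _ f); apply: le_trans (le_bigmax _ _ g).
exact: le_bigmax.
Qed.

Lemma win_prob_onT_le_val (mu : {ffun X -> R}) n (w : 'I_n -> {ffun X -> R}) f g h :
  (forall i, w i = mu) -> win_prob_on w finset.setT f g h <= xor_val mu t n.
Proof.
move=> w_mu; suff -> : win_prob_on w finset.setT f g h = xor_win_prob mu t f g h.
  exact: xor_win_prob_le_val.
apply: eq_bigr => q _; congr (_ * _%:R).
  by apply: eq_bigr => i _; rewrite w_mu.
congr nat_of_bool; by apply/forall_inP/forallP => win_all i *; apply: win_all; rewrite ?inE.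
Qed.

Section DistrWeights.
Variables (n : nat) (w : 'I_n -> {ffun X -> R}).
Hypothesis w_distr : forall i, is_distr (w i).

Lemma prod_weights_ge0 (q : n.-tuple X) : 0 <= \prod_(i < n) w i (tnth q i).
Proof. by apply: prodr_ge0 => i _; case: (w_distr i). Qed.

Lemma win_prob_on_subset (U V : {set 'I_n}) f g h :
  V \subset U -> win_prob_on w U f g h <= win_prob_on w V f g h.
Proof.
move=> VU; apply: ler_sum => q _; apply: ler_wpM2l; first exact: prod_weights_ge0.
case: forall_inP => [winU|_]; last by rewrite ler0n.
have winV : [forall i in V, wins_at f g h q i].
  by apply/forall_inP => i /(fintype.subsetP VU); exact: winU.
by rewrite winV.
Qed.

Lemma win_prob_on_le1 U f g h : win_prob_on w U f g h <= 1.
Proof.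
rewrite -(sum_prod_distr w_distr); apply: ler_sum => q _.
by rewrite ler_piMr ?prod_weights_ge0 // lern1 leq_b1.
Qed.

End DistrWeights.

Lemma wins_at_fix_question n (i0 : 'I_n.+1) (x : X) f g h q j :
  wins_at f g h (insert_tuple i0 x q) (lift i0 j)
  = wins_at (fix_question i0 x.1.1 f) (fix_question i0 x.1.2 g) (fix_question i0 x.2 h) q j.
Proof. by rewrite /wins_at !ffunE !tnth_mktuple !map_insert_tuple liftK. Qed.

Lemma win_prob_on_fix_question n (w : 'I_n.+1 -> {ffun X -> R}) (U : {set 'I_n.+1})
    (i0 : 'I_n.+1) f g h :
  i0 \notin U ->
  win_prob_on w U f g h = \sum_(x : X) w i0 x *
    win_prob_on (fun j => w (lift i0 j)) (lift i0 @^-1: U)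
      (fix_question i0 x.1.1 f) (fix_question i0 x.1.2 g) (fix_question i0 x.2 h).
Proof.
move=> i0U; rewrite /win_prob_on (sum_insert_tuple i0); apply: eq_bigr => x _.
rewrite mulr_sumr; apply: eq_bigr => q _.
rewrite (prod_insert_tuple i0 (fun k => w k)) -mulrA; congr (_ * (_ * _%:R)).
congr nat_of_bool; apply/forall_inP/forall_inP => [winU j|winU k kU].
  by rewrite inE -wins_at_fix_question => /winU.
case: (unliftP i0 k) kU => [j -> jU|->]; last by rewrite (negbTE i0U).
by rewrite wins_at_fix_question; apply: winU; rewrite inE.
Qed.

(* Fixing the question of a coordinate outside [U] leaves a game of the same kind on one
   coordinate less; averaging over that question discards the coordinate. *)
Lemma win_prob_on_le_val (mu' : {ffun X -> R}) n (w : 'I_n -> {ffun X -> R})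
    (U : {set 'I_n}) f g h :
  (forall i, is_distr (w i)) -> (forall i, i \in U -> w i = mu') ->
  win_prob_on w U f g h <= xor_val mu' t #|U|.
Proof.
elim: n w U f g h => [|n IH] w U f g h w_distr w_mu;
  have [UT|UnT] := eqVneq U finset.setT.
- by rewrite UT cardsT card_ord win_prob_onT_le_val // => i; rewrite w_mu ?UT ?inE.
- by case/negP: UnT; apply/eqP/setP => -[].
- by rewrite UT cardsT card_ord win_prob_onT_le_val // => i; rewrite w_mu ?UT ?inE.
rewrite -finset.subTset in UnT; have [i0 _ i0U] := fintype.subsetPn UnT.
rewrite (win_prob_on_fix_question _ _ _ _ i0U) -(card_preimset_lift i0U).
apply: le_trans (_ : \sum_(x : X) w i0 x * xor_val mu' t #|lift i0 @^-1: U| <= _).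
  apply: ler_sum => x _; apply: ler_wpM2l; first by case: (w_distr i0).
  by apply: IH => // j; rewrite inE => /w_mu.
by rewrite -mulr_suml; case: (w_distr i0) => _ ->; rewrite mul1r.
Qed.

Definition pick_distr (mu' nu : {ffun X -> R}) n (b : {ffun 'I_n -> bool}) (i : 'I_n) :=
  if b i then mu' else nu.

Lemma xor_win_prob_mixture (mu' nu : {ffun X -> R}) delta n
    (f : {ffun n.-tuple S -> n.-tuple A}) (g : {ffun n.-tuple G -> n.-tuple A})
    (h : {ffun n.-tuple P -> n.-tuple A}) :
  xor_win_prob [ffun q => delta * mu' q + (1 - delta) * nu q] t f g h
  = \sum_(b : {ffun 'I_n -> bool})
      coin_weight delta b * win_prob_on (pick_distr mu' nu b) finset.setT f g h.
Proof.
under [RHS]eq_bigr do rewrite mulr_sumr.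
rewrite exchange_big; apply: eq_bigr => q _.
rewrite (eq_bigr (fun i => \sum_(j : bool)
    if j then delta * mu' (tnth q i) else (1 - delta) * nu (tnth q i))); last first.
  by move=> i _; rewrite big_bool ffunE.
rewrite bigA_distr_bigA mulr_suml; apply: eq_bigr => b _.
rewrite mulrA -big_split /=; congr (_ * _%:R).
  by apply: eq_bigr => i _; rewrite /pick_distr; case: (b i).
congr nat_of_bool; by apply/forallP/forall_inP => win_all i *; apply: win_all; rewrite ?inE.
Qed.

Lemma win_prob_pick_le (mu' nu : {ffun X -> R}) m n (b : {ffun 'I_n -> bool}) f g h :
  is_distr mu' -> is_distr nu ->
  win_prob_on (pick_distr mu' nu b) finset.setT f g h
  <= xor_val mu' t m + 2 ^+ m * 2^-1 ^+ #|[set i | b i]|.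
Proof.
move=> mu'_distr nu_distr.
have pick_distr_ok i : is_distr (pick_distr mu' nu b i) by rewrite /pick_distr; case: (b i).
have [le_m_k|lt_k_m] := leqP m #|[set i | b i]|.
  have [V Vb <-] := subset_of_card le_m_k.
  apply: le_trans (_ : xor_val mu' t #|V| <= _); last first.
    by rewrite lerDl mulr_ge0 ?exprn_ge0 ?invr_ge0.
  apply: le_trans (win_prob_on_subset pick_distr_ok f g h (finset.subsetT V)) _.
  by apply: win_prob_on_le_val => // i /(fintype.subsetP Vb); rewrite inE /pick_distr => ->.
apply: le_trans (win_prob_on_le1 pick_distr_ok _ f g h) _.
apply: ler_wpDl; first exact: xor_val_ge0.
rewrite -(subnK (ltnW lt_k_m)) exprD -mulrA -exprMn divff // expr1n mulr1.
by apply: exprn_ege1; rewrite ler1n.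
Qed.

Lemma xor_win_prob_mixture_le (mu' nu : {ffun X -> R}) (delta : R) m n
    (f : {ffun n.-tuple S -> n.-tuple A}) (g : {ffun n.-tuple G -> n.-tuple A})
    (h : {ffun n.-tuple P -> n.-tuple A}) :
  is_distr mu' -> is_distr nu -> 0 <= delta <= 1 ->
  xor_win_prob [ffun q => delta * mu' q + (1 - delta) * nu q] t f g h
  <= xor_val mu' t m + 2 ^+ m * (1 - delta / 2) ^+ n.
Proof.
move=> mu'_distr nu_distr delta01; rewrite xor_win_prob_mixture.
apply: le_trans (_ : \sum_(b : {ffun 'I_n -> bool}) coin_weight delta b *
    (xor_val mu' t m + 2 ^+ m * 2^-1 ^+ #|[set i | b i]|) <= _).
  apply: ler_sum => b _; apply: ler_wpM2l; first exact: coin_weight_ge0.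
  exact: win_prob_pick_le.
have sum_coin_weight : \sum_(b : {ffun 'I_n -> bool}) coin_weight delta b = 1.
  have := sum_coin_weight_expr n delta 1; rewrite mulr1 addrC subrK expr1n => <-.
  by apply: eq_bigr => b _; rewrite expr1n mulr1.
under eq_bigr do rewrite mulrDr mulrCA.
rewrite big_split -mulr_suml -mulr_sumr /= sum_coin_weight mul1r sum_coin_weight_expr.
suff -> : delta * 2^-1 + (1 - delta) = 1 - delta / 2 by [].
lra.
Qed.

End ProductXorGame.

Lemma ln2_le (R : realType) : ln (2 : R) <= 5 / 6.
Proof.
have e2 : expR (5 / 6 : R) = expR (5 / 12) ^+ 2 by rewrite -expRM_natl; congr expR; lra.
have two_le : (2 : R) <= expR (5 / 6) by rewrite e2; have := expR_ge1Dx (5 / 12 : R); nra.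
by rewrite -[leRHS](expRK (5 / 6 : R)) ler_ln // ?posrE ?expR_gt0.
Qed.

(* With [y = delta n] the left-hand side is at most [2 ^ (y / 2) * exp (- y / 2)], which
   [ln 2 <= 5 / 6] bounds by [2 ^ (- y / 10)]: this is where the constant [1 / 10] comes from. *)
Lemma exp2_truncn_decay_le (R : realType) (delta : R) n : 0 <= delta <= 2 ->
  2 ^+ Num.truncn (delta * n%:R / 2) * (1 - delta / 2) ^+ n
  <= 2 `^ (- (10^-1 * delta * n%:R)).
Proof.
case/andP=> d0 d2; set y := delta * n%:R.
have y0 : 0 <= y by rewrite mulr_ge0.
have pow2E (x : R) : 2 `^ x = expR (x * ln 2) by rewrite /powR pnatr_eq0.
have exp2_le : (2 : R) ^+ Num.truncn (y / 2) <= expR (y / 2 * ln 2).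
  rewrite -powR_mulrn // -pow2E; apply: ler_powR; first lra.
  by rewrite truncn_le; lra.
have decay_le : (1 - delta / 2) ^+ n <= expR (- (y / 2)).
  rewrite (_ : - (y / 2) = n%:R * - (delta / 2)); last by rewrite /y; lra.
  rewrite expRM_natl; apply: lerXn2r; rewrite ?nnegrE ?expR_ge0 //; first lra.
  by have := expR_ge1Dx (- (delta / 2)); lra.
apply: le_trans (_ : expR (y / 2 * ln 2) * expR (- (y / 2)) <= _).
  by apply: ler_pM => //; apply: exprn_ge0; lra.
rewrite -expRD pow2E ler_expR -[10^-1 * _ * _]mulrA -/y.
have : 0 <= y * (5 / 6 - ln 2) by rewrite mulr_ge0 // subr_ge0 ln2_le.
nra.
Qed.

Theorem lemma2p5 :
  exists c : rat, 0 < c /\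
  forall (R : realType) (S G P : finType) (A : finZmodType)
         (mu' nu : {ffun S * G * P -> R}) (delta : R) (t : S * G * P -> A) (n : nat),
    is_distr mu' -> is_distr nu -> 0 < delta -> delta <= 1 ->
    let mu := [ffun q => delta * mu' q + (1 - delta) * nu q] in
    xor_val mu t n <=
      xor_val mu' t (Num.truncn (delta * n%:R / 2))
      + (2 : R) `^ (- (ratr c * delta * n%:R)).
Proof.
exists 10%:R^-1; split; first by rewrite invr_gt0 ltr0n.
move=> R S G P A mu' nu delta t n mu'_distr nu_distr d0 d1 /=.
rewrite fmorphV rmorph_nat; set m := Num.truncn _.
have delta01 : 0 <= delta <= 1 by rewrite (ltW d0) d1.
have bound_ge0 : 0 <= xor_val mu' t m + 2 `^ (- (10^-1 * delta * n%:R)).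
  by rewrite addr_ge0 ?xor_val_ge0 ?powR_ge0.
apply: bigmax_le => // f _; apply: bigmax_le => // g _; apply: bigmax_le => // h _.
apply: le_trans (xor_win_prob_mixture_le _ m _ _ _ mu'_distr nu_distr delta01) _.
by rewrite lerD2l exp2_truncn_decay_le // (ltW d0) (le_trans d1) ?ler1n.
Qed.
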